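(* Let $0<\tau\le2^*-1$ be fixed. In the setting below, there exists a sequence $\sigma_\alpha\to0$ of positive numbers depending only on $(\mu_{i,\alpha})_\alpha$ and $(x_{i,\alpha})_\alpha$, $1\le i\le k$, such that for all $\alpha$ and all $x\in M$ $$\Big(\sum_{i=1}^kB_{i,\alpha}(x)\Big)^{2^*-1-\tau}\Big(\sum_{i=1}^k\Theta_{i,\alpha}(x)B_{i,\alpha}(x)\Big)^{\tau}\le\sigma_\alpha\Big(\sum_{i=0}^kB_{i,\alpha}(x)+\sum_{i=1}^kB_{i,\alpha}(x)^{2^*-1}\Big).$$
   Context: $(M,g)$ smooth closed Riemannian manifold, $n\ge3$, $2^*=\frac{2n}{n-2}$; $k\ge1$; $x_{i,\alpha}\in M$, $\mu_{i,\alpha}>0$ ($1\le i\le k$) with $\mu_{i,\alpha}\to0$ and, for $i\ne j$, $\frac{\mu_{i,\alpha}}{\mu_{j,\alpha}}+\frac{\mu_{j,\alpha}}{\mu_{i,\alpha}}+\frac{d_g(x_{i,\alpha},x_{j,\alpha})^2}{\mu_{i,\alpha}\mu_{j,\alpha}}\to\infty$. $B_{i,\alpha}(x)=\mu_{i,\alpha}^{\frac{n-2}{2}}(\mu_{i,\alpha}^2+\frac{d_g(x_{i,\alpha},x)^2}{n(n-2)})^{-\frac{n-2}{2}}$ for $1\le i\le k$; $B_{0,\alpha}$ is either identically $0$ or identically $1$ (it equals $0$ iff $u_0\equiv0$ and $\ker(\triangle_g+h)=\{0\}$, for given $h\in L^\infty(M)$ and a solution $u_0$ of $\triangle_gu_0+hu_0=|u_0|^{2^*-2}u_0$).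 $\theta_{i,\alpha}(x)=\mu_{i,\alpha}+d_g(x_{i,\alpha},x)$; $\Theta_{i,\alpha}=\theta_{i,\alpha}$ if $n=3$, $\theta_{i,\alpha}^2|\ln\theta_{i,\alpha}|$ if $n=4$, $\theta_{i,\alpha}^2$ if $n\ge5$. *)

From Stdlib Require Import Reals Lra.
Open Scope R_scope.

(* Real power with the convention 0^y = 0 (used only for y > 0 with base 0;
   for positive bases it is Stdlib's Rpower x y = exp (y ln x)). *)
Definition rpow (x y : R) : R :=
  if Req_EM_T x 0 then 0 else Rpower x y.

Definition crit (n : nat) : R := 2 * INR n / (INR n - 2).

Definition is_metric {M : Type} (d : M -> M -> R) : Prop :=
  (forall x y, 0 <= d x y) /\ (forall x y, d x y = 0 <-> x = y) /\
  (forall x y, d x y = d y x) /\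
  (forall x y z, d x z <= d x y + d y z).

(* sequential compactness (M compact, as a closed manifold is) *)
Definition seq_compact {M : Type} (d : M -> M -> R) : Prop :=
  forall u : nat -> M, exists (phi : nat -> nat) (l : M),
    (forall m, (phi m < phi (S m))%nat) /\
    Un_cv (fun m => d (u (phi m)) l) 0.

Definition bubble (n : nat) {M : Type} (d : M -> M -> R)
    (mu : R) (p x : M) : R :=
  rpow mu ((INR n - 2) / 2) *
  rpow (mu ^ 2 + d p x ^ 2 / (INR n * (INR n - 2))) (- ((INR n - 2) / 2)).

Definition theta {M : Type} (d : M -> M -> R) (mu : R) (p x : M) : R :=
  mu + d p x.

Definition Theta (n : nat) {M : Type} (d : M -> M -> R)
    (mu : R) (p x : M) : R :=
  let t := theta d mu p x in
  match n with
  | 3%nat => t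
  | 4%nat => t ^ 2 * Rabs (ln t)
  | _ => t ^ 2
  end.

(* finite sum over i = 0..k-1 (indices 1..k of the paper shifted by one) *)
Fixpoint sumk (k : nat) (f : nat -> R) : R :=
  match k with O => 0 | S k' => sumk k' f + f k' end.

From Stdlib Require Import Reals Lra Lia Classical ClassicalEpsilon.
Open Scope R_scope.

(* Write s for the sum of the scales mu_i and r = sqrt s.  A bubble can exceed
   r^((n-2)/2) at x only if theta_i(x)^2 <= 2 n (n-2) r, and on the bounded
   manifold Theta_i <= C theta_i; hence sum Theta_i B_i <= o(1) S + O(rho^2),
   where S = sum B_i and rho = r^((n-2)/4), and also sum Theta_i B_i <= C S.
   If S <= rho the left-hand side is at most C S^(2^*-1) <= C rho^(2^*-2) S;
   otherwise sum Theta_i B_i <= o(1) S and S^(2^*-1) <= k^(2^*-1) sum B_i^(2^*-1).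
   The separation of the bubbles, the value of B_0 and the bound tau <= 2^*-1
   play no role. *)

Lemma rpow_pos x y : 0 < x -> rpow x y = Rpower x y.
Proof. intro Hx. unfold rpow. destruct (Req_EM_T x 0); [lra | reflexivity]. Qed.

Lemma Rpower_gt0 x y : 0 < Rpower x y.
Proof. apply exp_pos. Qed.

Lemma rpow_ge0 x y : 0 <= rpow x y.
Proof. unfold rpow. destruct (Req_EM_T x 0); [lra | left; apply Rpower_gt0]. Qed.

Lemma rpow_le_Rpower x y e : 0 < e -> 0 <= x <= y -> 0 < y -> rpow x e <= Rpower y e.
Proof.
  intros He Hxy Hy. destruct (Req_EM_T x 0) as [-> | Hx0].
  - unfold rpow. destruct (Req_EM_T 0 0); [left; apply Rpower_gt0 | lra].
  - rewrite rpow_pos by lra. apply Rle_Rpower_l; lra.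
Qed.

Lemma Rpower_Rinv_base x y : 0 < x -> Rpower (/ x) y = / Rpower x y.
Proof.
  intro Hx. unfold Rpower. rewrite ln_Rinv by auto.
  replace (y * - ln x) with (- (y * ln x)) by ring. apply exp_Ropp.
Qed.

Lemma Rpower_le_reg_l a b e : 0 < e -> 0 < a -> 0 < b -> Rpower a e <= Rpower b e -> a <= b.
Proof.
  intros He Ha Hb H. apply Rnot_lt_le. intro Hba.
  pose proof (Rlt_Rpower_l b a e He ltac:(lra)). lra.
Qed.

Lemma Rpower_sub_mul S Y p tau : 0 < Y -> 0 < S ->
  Rpower S (p - tau) * Rpower (Y * S) tau = Rpower Y tau * Rpower S p.
Proof.
  intros HY HS. rewrite <- Rpower_mult_distr by auto.
  replace p with ((p - tau) + tau) at 2 by ring. rewrite Rpower_plus. ring.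
Qed.

Lemma sumk_ext k f g : (forall i, (i < k)%nat -> f i = g i) -> sumk k f = sumk k g.
Proof.
  induction k as [|k IH]; intro H; simpl; [reflexivity|].
  rewrite IH by (intros; apply H; lia). rewrite H by lia. reflexivity.
Qed.

Lemma sumk_le k f g : (forall i, (i < k)%nat -> f i <= g i) -> sumk k f <= sumk k g.
Proof.
  induction k as [|k IH]; intro H; simpl; [lra|].
  assert (sumk k f <= sumk k g) by (apply IH; intros; apply H; lia).
  assert (f k <= g k) by (apply H; lia). lra.
Qed.

Lemma sumk_const k c : sumk k (fun _ => c) = INR k * c.
Proof. induction k as [|k IH]; simpl sumk; [simpl; ring|]. rewrite IH, S_INR. ring. Qed.

Lemma sumk_nonneg k f : (forall i, (i < k)%nat -> 0 <= f i) -> 0 <= sumk k f.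
Proof.
  intro H. replace 0 with (sumk k (fun _ => 0)) by (rewrite sumk_const; ring).
  apply sumk_le; auto.
Qed.

Lemma sumk_pos k f : (1 <= k)%nat -> (forall i, (i < k)%nat -> 0 < f i) -> 0 < sumk k f.
Proof.
  intros Hk H. destruct k as [|k]; [lia|]. simpl.
  assert (0 <= sumk k f) by (apply sumk_nonneg; intros; left; apply H; lia).
  assert (0 < f k) by (apply H; lia). lra.
Qed.

Lemma sumk_scale k c f : sumk k (fun i => c * f i) = c * sumk k f.
Proof. induction k as [|k IH]; simpl; [ring|]. rewrite IH; ring. Qed.

Lemma sumk_add k f g : sumk k (fun i => f i + g i) = sumk k f + sumk k g.
Proof. induction k as [|k IH]; simpl; [ring|]. rewrite IH; ring. Qed.

Lemma le_sumk k f j : (j < k)%nat -> (forall i, (i < k)%nat -> 0 <= f i) -> f j <= sumk k f.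
Proof.
  induction k as [|k IH]; intros Hj H; [lia|]. simpl.
  assert (0 <= sumk k f) by (apply sumk_nonneg; intros; apply H; lia).
  destruct (Nat.eq_dec j k) as [-> | Hjk]; [lra|].
  assert (f j <= sumk k f) by (apply IH; [lia | intros; apply H; lia]).
  assert (0 <= f k) by (apply H; lia). lra.
Qed.

Lemma sumk_argmax k f : (1 <= k)%nat ->
  exists j, (j < k)%nat /\ forall i, (i < k)%nat -> f i <= f j.
Proof.
  induction k as [|k IH]; intro Hk; [lia|]. destruct (Nat.eq_dec k 0) as [-> | Hk0].
  - exists 0%nat. split; [lia|]. intros i Hi. replace i with 0%nat by lia. lra.
  - destruct IH as [j [Hj Hmax]]; [lia|].
    destruct (Rle_dec (f j) (f k)).
    + exists k. split; [lia|]. intros i Hi.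
      destruct (Nat.eq_dec i k) as [-> | ]; [lra|]. specialize (Hmax i ltac:(lia)). lra.
    + exists j. split; [lia|]. intros i Hi.
      destruct (Nat.eq_dec i k) as [-> | ]; [lra|]. apply Hmax; lia.
Qed.

Lemma Rpower_sumk_le k f p : (1 <= k)%nat -> 0 <= p -> (forall i, (i < k)%nat -> 0 < f i) ->
  Rpower (sumk k f) p <= Rpower (INR k) p * sumk k (fun i => Rpower (f i) p).
Proof.
  intros Hk Hp Hf. destruct (sumk_argmax k f Hk) as [j [Hj Hmax]].
  assert (Hk0 : 0 < INR k) by (apply lt_0_INR; lia).
  assert (Hfj : 0 < f j) by auto.
  assert (HS : sumk k f <= INR k * f j) by (rewrite <- sumk_const; apply sumk_le; auto).
  assert (Rpower (sumk k f) p <= Rpower (INR k * f j) p).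
  { apply Rle_Rpower_l; auto. split; [apply sumk_pos|]; auto. }
  assert (Rpower (f j) p <= sumk k (fun i => Rpower (f i) p)).
  { apply (le_sumk k (fun i => Rpower (f i) p)); auto. intros; left; apply Rpower_gt0. }
  rewrite <- Rpower_mult_distr in * by auto.
  assert (0 < Rpower (INR k) p) by apply Rpower_gt0. nra.
Qed.

Lemma Un_cv_scal c u : Un_cv u 0 -> Un_cv (fun a => c * u a) 0.
Proof.
  intros Hu e He. destruct (Req_dec c 0) as [-> | Hc].
  - exists 0%nat. intros. unfold R_dist. rewrite Rmult_0_l, Rminus_0_r, Rabs_R0. lra.
  - assert (Hc' : 0 < Rabs c) by (apply Rabs_pos_lt; auto).
    destruct (Hu (e / Rabs c)) as [N HN]; [apply Rdiv_lt_0_compat; auto|].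
    exists N. intros a Ha. specialize (HN a Ha). unfold R_dist in *.
    rewrite Rminus_0_r in *. rewrite Rabs_mult.
    apply (Rmult_lt_compat_l (Rabs c)) in HN; auto.
    replace (Rabs c * (e / Rabs c)) with e in HN by (field; lra). lra.
Qed.

Lemma Un_cv_sumk k (f : nat -> nat -> R) :
  (forall i, (i < k)%nat -> Un_cv (f i) 0) -> Un_cv (fun a => sumk k (fun i => f i a)) 0.
Proof.
  induction k as [|k IH]; intro H; simpl.
  - intros e He. exists 0%nat. intros. unfold R_dist. rewrite Rminus_0_r, Rabs_R0. lra.
  - replace 0 with (0 + 0) by ring. apply CV_plus; [apply IH; intros|]; apply H; lia.
Qed.

Lemma Un_cv_Rpower u e : 0 < e -> (forall a, 0 < u a) -> Un_cv u 0 ->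
  Un_cv (fun a => Rpower (u a) e) 0.
Proof.
  intros He Hpos Hu eps Heps.
  destruct (Hu (Rpower eps (/ e)) (Rpower_gt0 _ _)) as [N HN].
  exists N. intros a Ha. specialize (HN a Ha). unfold R_dist in *.
  rewrite Rminus_0_r, Rabs_right in HN by (left; apply Hpos).
  rewrite Rminus_0_r, Rabs_right by (left; apply Rpower_gt0).
  replace eps with (Rpower (Rpower eps (/ e)) e).
  - apply Rlt_Rpower_l; auto.
  - rewrite Rpower_mult. replace (/ e * e) with 1 by (field; lra). apply Rpower_1; auto.
Qed.

Lemma Un_cv_sqrt u : Un_cv u 0 -> Un_cv (fun a => sqrt (u a)) 0.
Proof.
  intro Hu. rewrite <- sqrt_0. apply continuity_seq; auto. apply continuity_pt_sqrt. lra.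
Qed.

Lemma Un_cv_bounded u l : Un_cv u l -> exists B, forall a, u a <= B.
Proof.
  intro Hu. destruct (cauchy_bound u) as [B HB].
  { apply CV_Cauchy. exists l. auto. }
  exists B. intro a. apply HB. exists a. reflexivity.
Qed.

Lemma seq_compact_dist_bounded {M : Type} (d : M -> M -> R) :
  is_metric d -> seq_compact d -> exists B, 0 <= B /\ forall x y, d x y <= B.
Proof.
  intros [Hpos [_ [Hsym Htri]]] Hcpt.
  destruct (classic (inhabited M)) as [[x0] | Hempty].
  2:{ exists 0. split; [lra|]. intros x. exfalso. apply Hempty. constructor. exact x. }
  assert (Hball : exists B, forall y, d x0 y <= B).
  { apply NNPP. intro Hunb.
    assert (Hfar : forall m : nat, exists y, INR m < d x0 y).
    { intro m. apply NNPP. intro Hno. apply Hunb. exists (INR m). intro y.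
      apply Rnot_lt_le. intro Hlt. apply Hno. exists y. auto. }
    destruct (choice _ Hfar) as [y Hy].
    destruct (Hcpt y) as [phi [l [Hphi Hcv]]].
    destruct (Hcv 1 ltac:(lra)) as [N HN].
    destruct (INR_unbounded (d x0 l + 1)) as [m0 Hm0].
    set (m := Nat.max N m0).
    specialize (HN m (Nat.le_max_l _ _)). unfold R_dist in HN.
    rewrite Rminus_0_r in HN. apply Rabs_def2 in HN.
    assert (Hphim : (m <= phi m)%nat).
    { clear -Hphi. induction m as [|m IH]; [lia|]. specialize (Hphi m). lia. }
    assert (INR m0 <= INR (phi m)) by (apply le_INR; unfold m in *; lia).
    specialize (Hy (phi m)). specialize (Htri x0 l (y (phi m))).
    rewrite (Hsym l) in Htri. lra. }
  destruct Hball as [B HB].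
  exists (2 * B). split; [specialize (HB x0); specialize (Hpos x0 x0); lra|].
  intros x y. specialize (Htri x x0 y). rewrite (Hsym x x0) in Htri.
  pose proof (HB x). pose proof (HB y). lra.
Qed.

Lemma mul_abs_ln_le t : 0 < t -> t * Rabs (ln t) <= t ^ 2 + 1.
Proof.
  intro Ht.
  assert (Hln : forall u, 0 < u -> ln u <= u - 1).
  { intros u Hu. pose proof (exp_ineq1_le (ln u)) as He. rewrite exp_ln in He; lra. }
  assert (Ht' : 0 < / t) by (apply Rinv_0_lt_compat; lra).
  pose proof (Hln t Ht). pose proof (Hln (/ t) Ht') as Hinv.
  rewrite ln_Rinv in Hinv by lra.
  assert (Habs : Rabs (ln t) <= t + / t) by (apply Rabs_le; lra).
  apply (Rmult_le_compat_l t) in Habs; [|lra].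
  replace (t * (t + / t)) with (t ^ 2 + 1) in Habs by (field; lra). exact Habs.
Qed.

Lemma Theta_bounds n {M : Type} (d : M -> M -> R) mu p x D :
  0 < theta d mu p x <= D ->
  0 <= Theta n d mu p x <= (1 + D ^ 2) * theta d mu p x.
Proof.
  intro Ht. unfold Theta. set (t := theta d mu p x) in *.
  pose proof (mul_abs_ln_le t ltac:(lra)). pose proof (Rabs_pos (ln t)).
  assert (t * t <= D * t) by nra. assert (D <= 1 + D ^ 2) by nra.
  destruct n as [|[|[|[|[|n]]]]]; simpl; split; nra.
Qed.

Lemma INR_ge3 n : (3 <= n)%nat -> 3 <= INR n.
Proof. intro Hn. replace 3 with (INR 3) by (simpl; ring). apply le_INR; exact Hn. Qed.

Section Bubble.

Variables (n : nat) (Hn : (3 <= n)%nat) (M : Type) (d : M -> M -> R).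

Let c := INR n * (INR n - 2).
Let m := (INR n - 2) / 2.

Lemma bubble_eq mu p x : 0 < mu ->
  bubble n d mu p x = Rpower (mu / (mu ^ 2 + d p x ^ 2 / c)) m.
Proof.
  intro Hmu. pose proof (INR_ge3 n Hn) as Hn3.
  assert (HX : 0 < mu ^ 2 + d p x ^ 2 / c).
  { assert (0 <= d p x ^ 2 / c).
    { apply Rmult_le_pos; [apply pow2_ge_0 | left; apply Rinv_0_lt_compat; unfold c; nra]. }
    nra. }
  unfold bubble. fold c m. rewrite !rpow_pos by auto.
  change (mu / (mu ^ 2 + d p x ^ 2 / c)) with (mu * / (mu ^ 2 + d p x ^ 2 / c)).
  rewrite <- Rpower_mult_distr by (auto; apply Rinv_0_lt_compat; auto).
  rewrite Rpower_Ropp, Rpower_Rinv_base by auto. reflexivity.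
Qed.

Lemma bubble_pos mu p x : 0 < mu -> 0 < bubble n d mu p x.
Proof. intro Hmu. rewrite bubble_eq by auto. apply Rpower_gt0. Qed.

(* [bubble >= r^m] means [mu / (mu^2 + d^2/c) >= r], which with [mu <= r^2]
   forces [mu^2 + d^2/c <= r]; then [(mu + d)^2 <= 2 c (mu^2 + d^2/c)] as [c >= 1]. *)
Lemma theta_sq_le_of_bubble_ge r mu p x :
  0 <= d p x -> 0 < r -> 0 < mu <= r ^ 2 -> Rpower r m <= bubble n d mu p x ->
  theta d mu p x ^ 2 <= 2 * c * r.
Proof.
  intros Hd Hr Hmu Hb. pose proof (INR_ge3 n Hn) as Hn3.
  assert (Hc : 3 <= c) by (unfold c; nra).
  rewrite bubble_eq in Hb by lra.
  set (y := d p x ^ 2 / c) in *.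
  assert (Hy : 0 <= y)
    by (apply Rmult_le_pos; [apply pow2_ge_0 | left; apply Rinv_0_lt_compat; lra]).
  assert (HX : 0 < mu ^ 2 + y) by nra.
  apply Rpower_le_reg_l in Hb;
    [| unfold m; lra | auto | apply Rdiv_lt_0_compat; lra].
  assert (HrX : r * (mu ^ 2 + y) <= mu).
  { apply (Rmult_le_compat_r (mu ^ 2 + y)) in Hb; [|lra].
    replace (mu / (mu ^ 2 + y) * (mu ^ 2 + y)) with mu in Hb by (field; lra). exact Hb. }
  assert (HXr : mu ^ 2 + y <= r) by nra.
  assert (Hdy : d p x ^ 2 = c * y) by (unfold y; field; lra).
  unfold theta. assert (0 <= (mu - d p x) ^ 2) by apply pow2_ge_0. nra.
Qed.

Lemma Theta_mul_bubble_le r eta D mu p x :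
  0 <= d p x -> 0 < r -> 0 < mu <= r ^ 2 -> theta d mu p x <= D ->
  0 <= eta -> 2 * c * r <= eta ^ 2 ->
  Theta n d mu p x * bubble n d mu p x
  <= (1 + D ^ 2) * eta * bubble n d mu p x + (1 + D ^ 2) * D * Rpower r m.
Proof.
  intros Hd Hr Hmu HD Heta Hceta.
  assert (Hth : 0 < theta d mu p x) by (unfold theta; lra).
  destruct (Theta_bounds n d mu p x D ltac:(lra)) as [HT0 HT].
  pose proof (bubble_pos mu p x ltac:(lra)) as Hb.
  assert (HK : 0 < 1 + D ^ 2) by nra.
  destruct (Rle_lt_dec (Rpower r m) (bubble n d mu p x)) as [Hbig | Hsmall].
  - pose proof (theta_sq_le_of_bubble_ge r mu p x Hd Hr Hmu Hbig).
    assert (theta d mu p x <= eta).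
    { apply Rnot_lt_le. intro Hlt. assert (eta ^ 2 < theta d mu p x ^ 2) by nra. lra. }
    assert (Theta n d mu p x <= (1 + D ^ 2) * eta) by nra.
    assert (0 <= (1 + D ^ 2) * D * Rpower r m).
    { pose proof (Rpower_gt0 r m). apply Rmult_le_pos; nra. }
    assert (Theta n d mu p x * bubble n d mu p x <= (1 + D ^ 2) * eta * bubble n d mu p x)
      by (apply Rmult_le_compat_r; lra).
    lra.
  - assert (Theta n d mu p x <= (1 + D ^ 2) * D) by nra.
    assert (0 <= (1 + D ^ 2) * eta * bubble n d mu p x) by (apply Rmult_le_pos; nra).
    assert (Theta n d mu p x * bubble n d mu p x <= (1 + D ^ 2) * D * bubble n d mu p x)
      by (apply Rmult_le_compat_r; lra).
    assert (0 <= (1 + D ^ 2) * D) by nra.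
    assert ((1 + D ^ 2) * D * bubble n d mu p x <= (1 + D ^ 2) * D * Rpower r m)
      by (apply Rmult_le_compat_l; lra).
    lra.
Qed.

End Bubble.

(* Either [S <= rho], and then [S^(p-tau) T^tau <= A^tau S^p <= A^tau rho^(p-1) S],
   or [rho < S], and then [T <= (Y + C rho) S] and [S^p <= Q P]. *)
Lemma interpolation_le S T P A Y C rho p tau Q :
  1 <= p -> 0 < tau -> 0 < S -> 0 < rho -> 0 < A -> 0 <= Y -> 0 < C -> 0 <= Q -> 0 <= P ->
  0 <= T -> T <= A * S -> T <= Y * S + C * rho ^ 2 -> Rpower S p <= Q * P ->
  Rpower S (p - tau) * rpow T tau
  <= (Rpower A tau * Rpower rho (p - 1) + Q * Rpower (Y + C * rho) tau) * (S + P).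
Proof.
  intros Hp Htau HS Hrho HA HY HC HQ HP HT HTA HTY HSP.
  pose proof (Rpower_gt0 S (p - tau)) as HSpt.
  pose proof (Rpower_gt0 A tau) as HAt.
  pose proof (Rpower_gt0 rho (p - 1)) as Hrhop.
  assert (HZ : 0 < Y + C * rho) by nra.
  pose proof (Rpower_gt0 (Y + C * rho) tau) as HZt.
  destruct (Rle_lt_dec S rho) as [Hsmall | Hlarge].
  - assert (H1 : Rpower S (p - tau) * rpow T tau <= Rpower A tau * Rpower S p).
    { rewrite <- Rpower_sub_mul by auto. apply Rmult_le_compat_l; [lra|].
      apply rpow_le_Rpower; nra. }
    assert (H2 : Rpower S p <= Rpower rho (p - 1) * S).
    { replace p with ((p - 1) + 1) at 1 by ring. rewrite Rpower_plus, Rpower_1 by auto.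
      apply Rmult_le_compat_r; [lra|]. apply Rle_Rpower_l; lra. }
    assert (Rpower A tau * Rpower S p <= Rpower A tau * (Rpower rho (p - 1) * S))
      by (apply Rmult_le_compat_l; lra).
    assert (0 <= Q * Rpower (Y + C * rho) tau * (S + P)) by (apply Rmult_le_pos; nra).
    assert (0 <= Rpower A tau * Rpower rho (p - 1) * P) by (apply Rmult_le_pos; nra).
    nra.
  - assert (C * rho * rho <= C * rho * S) by (apply Rmult_le_compat_l; nra).
    assert (HTZ : T <= (Y + C * rho) * S) by nra.
    assert (H1 : Rpower S (p - tau) * rpow T tau <= Rpower (Y + C * rho) tau * Rpower S p).
    { rewrite <- Rpower_sub_mul by auto. apply Rmult_le_compat_l; [lra|].
      apply rpow_le_Rpower; nra. }
    assert (Rpower (Y + C * rho) tau * Rpower S p <= Rpower (Y + C * rho) tau * (Q * P))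
      by (apply Rmult_le_compat_l; lra).
    assert (0 <= Rpower A tau * Rpower rho (p - 1) * (S + P)) by (apply Rmult_le_pos; nra).
    assert (0 <= Q * Rpower (Y + C * rho) tau * S) by (apply Rmult_le_pos; nra).
    nra.
Qed.

Lemma crit_gt2 n : (3 <= n)%nat -> 2 < crit n.
Proof.
  intro Hn. pose proof (INR_ge3 n Hn). unfold crit.
  apply (Rmult_lt_reg_r (INR n - 2)); [lra|]. field_simplify; lra.
Qed.

Definition bubble_sigma (n k : nat) (tau D s : R) : R :=
  let r := sqrt s in
  let rho := Rpower r ((INR n - 2) / 2 / 2) in
  Rpower ((1 + D ^ 2) * D) tau * Rpower rho (crit n - 1 - 1)
  + Rpower (INR k) (crit n - 1)
    * Rpower ((1 + D ^ 2) * sqrt (2 * (INR n * (INR n - 2)) * r)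
              + INR k * ((1 + D ^ 2) * D) * rho) tau.

Lemma bubble_sigma_pos n k tau D s : 0 < bubble_sigma n k tau D s.
Proof.
  unfold bubble_sigma. pose proof (Rpower_gt0 ((1 + D ^ 2) * D) tau).
  pose proof (Rpower_gt0 (Rpower (sqrt s) ((INR n - 2) / 2 / 2)) (crit n - 1 - 1)).
  pose proof (Rpower_gt0 (INR k) (crit n - 1)).
  match goal with |- 0 < _ + _ * Rpower ?z tau => pose proof (Rpower_gt0 z tau) end.
  nra.
Qed.

Lemma bubble_sigma_cv n k tau D s :
  (3 <= n)%nat -> (1 <= k)%nat -> 0 < tau -> 0 < D ->
  (forall a, 0 < s a) -> Un_cv s 0 ->
  Un_cv (fun a => bubble_sigma n k tau D (s a)) 0.
Proof.
  intros Hn Hk Htau HD Hs Hcv. unfold bubble_sigma.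
  pose proof (INR_ge3 n Hn). pose proof (crit_gt2 n Hn).
  assert (Hk0 : 0 < INR k) by (apply lt_0_INR; lia).
  assert (Hr : forall a, 0 < sqrt (s a)) by (intro; apply sqrt_lt_R0; auto).
  assert (Hrho : Un_cv (fun a => Rpower (sqrt (s a)) ((INR n - 2) / 2 / 2)) 0)
    by (apply Un_cv_Rpower; [lra | auto | apply Un_cv_sqrt; auto]).
  assert (Heta : Un_cv (fun a => sqrt (2 * (INR n * (INR n - 2)) * sqrt (s a))) 0)
    by (apply Un_cv_sqrt, Un_cv_scal, Un_cv_sqrt; auto).
  replace 0 with (0 + 0) by ring. apply CV_plus; apply Un_cv_scal, Un_cv_Rpower; auto.
  - lra.
  - intro. apply Rpower_gt0.
  - intro a. pose proof (sqrt_pos (2 * (INR n * (INR n - 2)) * sqrt (s a))).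
    pose proof (Rpower_gt0 (sqrt (s a)) ((INR n - 2) / 2 / 2)).
    assert (0 < INR k * ((1 + D ^ 2) * D)) by (apply Rmult_lt_0_compat; nra). nra.
  - replace 0 with (0 + 0) by ring. apply CV_plus; apply Un_cv_scal; auto.
Qed.

Section BubbleSum.

Variables (n : nat) (Hn : (3 <= n)%nat) (M : Type) (d : M -> M -> R)
  (Hd : forall x y, 0 <= d x y) (k : nat) (Hk : (1 <= k)%nat).

Lemma bubble_sum_estimate tau D s (mus : nat -> R) (ps : nat -> M) x :
  0 < tau -> 0 < s ->
  (forall i, (i < k)%nat -> 0 < mus i <= s) ->
  (forall i, (i < k)%nat -> theta d (mus i) (ps i) x <= D) ->
  rpow (sumk k (fun i => bubble n d (mus i) (ps i) x)) (crit n - 1 - tau)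
  * rpow (sumk k (fun i => Theta n d (mus i) (ps i) x * bubble n d (mus i) (ps i) x)) tau
  <= bubble_sigma n k tau D s
     * (sumk k (fun i => bubble n d (mus i) (ps i) x)
        + sumk k (fun i => rpow (bubble n d (mus i) (ps i) x) (crit n - 1))).
Proof.
  intros Htau Hs Hmu Htheta.
  pose proof (INR_ge3 n Hn). pose proof (crit_gt2 n Hn).
  set (B := fun i => bubble n d (mus i) (ps i) x).
  set (TB := fun i => Theta n d (mus i) (ps i) x * B i).
  assert (HB : forall i, (i < k)%nat -> 0 < B i)
    by (intros; apply bubble_pos; auto; apply Hmu; auto).
  assert (HS : 0 < sumk k B) by (apply sumk_pos; auto).
  assert (HD : 0 < D).
  { specialize (Hmu 0%nat ltac:(lia)). specialize (Htheta 0%nat ltac:(lia)).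
    pose proof (Hd (ps 0%nat) x). unfold theta in Htheta. lra. }
  assert (Hk0 : 0 < INR k) by (apply lt_0_INR; lia).
  set (r := sqrt s). set (eta := sqrt (2 * (INR n * (INR n - 2)) * r)).
  set (rho := Rpower r ((INR n - 2) / 2 / 2)).
  assert (Hr : 0 < r) by (apply sqrt_lt_R0; auto).
  assert (Hr2 : r ^ 2 = s) by (apply pow2_sqrt; lra).
  assert (Heta2 : eta ^ 2 = 2 * (INR n * (INR n - 2)) * r)
    by (apply pow2_sqrt, Rmult_le_pos; nra).
  assert (Hrho2 : rho ^ 2 = Rpower r ((INR n - 2) / 2)).
  { unfold rho. simpl. rewrite Rmult_1_r, <- Rpower_plus. f_equal. field. }
  assert (HTheta : forall i, (i < k)%nat ->
            0 <= Theta n d (mus i) (ps i) x <= (1 + D ^ 2) * D).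
  { intros i Hi. assert (Hth : 0 < theta d (mus i) (ps i) x <= D).
    { specialize (Hmu i Hi). pose proof (Hd (ps i) x). unfold theta in *. split; [lra | auto]. }
    destruct (Theta_bounds n d (mus i) (ps i) x D Hth) as [HT0 HT].
    split; [auto|]. apply (Rle_trans _ _ _ HT). apply Rmult_le_compat_l; [nra | apply Hth]. }
  assert (HTA : sumk k TB <= (1 + D ^ 2) * D * sumk k B).
  { rewrite <- sumk_scale. apply sumk_le. intros i Hi. unfold TB.
    apply Rmult_le_compat_r; [left; auto | apply HTheta; auto]. }
  assert (HTY : sumk k TB
                <= (1 + D ^ 2) * eta * sumk k B + INR k * ((1 + D ^ 2) * D) * rho ^ 2).
  { rewrite Hrho2, <- sumk_scale, Rmult_assoc, <- sumk_const, <- sumk_add.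
    apply sumk_le. intros i Hi. apply Theta_mul_bubble_le; auto.
    - rewrite Hr2. apply Hmu; auto.
    - apply sqrt_pos.
    - lra. }
  assert (HSP : Rpower (sumk k B) (crit n - 1)
                <= Rpower (INR k) (crit n - 1) * sumk k (fun i => rpow (B i) (crit n - 1))).
  { rewrite (sumk_ext k (fun i => rpow (B i) (crit n - 1))
                        (fun i => Rpower (B i) (crit n - 1)))
      by (intros; apply rpow_pos; auto).
    apply Rpower_sumk_le; auto; lra. }
  rewrite rpow_pos by auto.
  apply interpolation_le; auto; try lra.
  - apply Rpower_gt0.
  - apply Rmult_lt_0_compat; nra.
  - apply Rmult_le_pos; [nra | apply sqrt_pos].
  - apply Rmult_lt_0_compat; nra.
  - left; apply Rpower_gt0.
  - apply sumk_nonneg. intros. apply rpow_ge0.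
  - apply sumk_nonneg. intros i Hi. unfold TB.
    apply Rmult_le_pos; [apply HTheta | left; apply HB]; auto.
Qed.

End BubbleSum.

Theorem lemmaA2
  (n : nat) (Hn : (3 <= n)%nat)
  (tau : R) (Htau : 0 < tau <= crit n - 1)
  (M : Type) (dg : M -> M -> R) (Hmet : is_metric dg) (Hcpt : seq_compact dg)
  (k : nat) (Hk : (1 <= k)%nat)
  (mu : nat -> nat -> R) (xc : nat -> nat -> M)
  (Hmupos : forall i a, (i < k)%nat -> 0 < mu i a)
  (Hmu0 : forall i, (i < k)%nat -> Un_cv (mu i) 0)
  (Hsep : forall i j, (i < k)%nat -> (j < k)%nat -> i <> j ->
     cv_infty (fun a => mu i a / mu j a + mu j a / mu i a
                        + dg (xc i a) (xc j a) ^ 2 / (mu i a * mu j a))) :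
  exists sigma : nat -> R,
    (forall a, 0 < sigma a) /\ Un_cv sigma 0 /\
    forall (B0 : R), (B0 = 0 \/ B0 = 1) ->
    forall (a : nat) (x : M),
      rpow (sumk k (fun i => bubble n dg (mu i a) (xc i a) x)) (crit n - 1 - tau)
      * rpow (sumk k (fun i => Theta n dg (mu i a) (xc i a) x
                               * bubble n dg (mu i a) (xc i a) x)) tau
      <= sigma a * (B0 + sumk k (fun i => bubble n dg (mu i a) (xc i a) x)
                    + sumk k (fun i => rpow (bubble n dg (mu i a) (xc i a) x)
                                            (crit n - 1))).
Proof.
  destruct (seq_compact_dist_bounded dg Hmet Hcpt) as [Db [HDb0 HDb]].
  set (s := fun a => sumk k (fun i => mu i a)).
  assert (Hs : forall a, 0 < s a) by (intro; apply sumk_pos; auto).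
  assert (Hmus : forall a i, (i < k)%nat -> 0 < mu i a <= s a).
  { intros a i Hi. split; auto. apply (le_sumk k (fun i => mu i a)); auto.
    intros; left; auto. }
  assert (Hscv : Un_cv s 0) by (apply Un_cv_sumk; auto).
  destruct (Un_cv_bounded s 0 Hscv) as [Ms HMs].
  pose proof (Hs 0%nat). pose proof (HMs 0%nat).
  exists (fun a => bubble_sigma n k tau (Db + Ms) (s a)).
  split; [intro; apply bubble_sigma_pos|]. split.
  - apply bubble_sigma_cv; auto; lra.
  - intros B0 HB0 a x.
    eapply Rle_trans.
    { apply (bubble_sum_estimate n Hn M dg (proj1 Hmet) k Hk tau (Db + Ms) (s a));
        auto; try lra.
      intros i Hi. unfold theta. pose proof (Hmus a i Hi). pose proof (HMs a).
      pose proof (HDb (xc i a) x). lra. }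
    cbv beta. apply Rmult_le_compat_l; [left; apply bubble_sigma_pos | destruct HB0; lra].
Qed.
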